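(* Let $c>0$. There is a constant $\delta=\delta(c)>0$ such that the following holds. Let $p\ge 2$ and let $\mathcal{F}$ be a finite family of $n\ge 1$ nonempty subsets of $\mathbb{R}^d$ whose dual hypergraph has a hereditarily $c$-linear Delaunay graph and which satisfies the $(p,2)$-property. Then there is a point $x\in\mathbb{R}^d$ contained in at least $\delta\, n/p$ members of $\mathcal{F}$.
   Context: A hypergraph $H=(V,\mathcal{E})$ consists of a finite vertex set $V$ and a collection $\mathcal{E}$ of subsets of $V$. For $S\subseteq V$, $H|_S=(S,\{e\cap S: e\in\mathcal{E}\})$. The Delaunay graph of $H$ is the graph on $V$ whose edges are the hyperedges of size exactly $2$. $H$ has a hereditarily $c$-linear Delaunay graph if for every nonempty $S\subseteq V$ the Delaunay graph of $H|_S$ has fewer than $c|S|$ edges. The dual hypergraph of a family $\mathcal{F}$ of subsets of $\mathbb{R}^d$ has vertex set $\mathcal{F}$ and, for each $x\in\mathbb{R}^d$, the hyperedge $e_x=\{B\in\mathcal{F}: x\in B\}$. $\mathcal{F}$ satisfies the $(p,2)$-property if among any $p$ members of $\mathcal{F}$ some two have nonempty intersection. *)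

From HB Require Import structures.
From mathcomp Require Import all_boot all_order all_algebra.
From mathcomp Require Import boolp classical_sets reals.
Set Implicit Arguments. Unset Strict Implicit. Unset Printing Implicit Defensive.
Import Order.TTheory GRing.Theory Num.Theory.
Local Open Scope ring_scope.
Local Open Scope classical_set_scope.

(* A family F of n subsets of R^d is an indexed family B : 'I_n -> set 'rV[R]_d;
   the vertex set of its dual hypergraph is 'I_n. *)

Definition dual_edge (R : realType) (d n : nat) (B : 'I_n -> set 'rV[R]_d)
  (x : 'rV[R]_d) : {set 'I_n} := [set i | x \in B i].

Definition delaunay_edges (R : realType) (d n : nat) (B : 'I_n -> set 'rV[R]_d)
  (S : {set 'I_n}) : {set {set 'I_n}} :=
  [set e : {set 'I_n} | (#|e| == 2)%N && `[< exists x, dual_edge B x :&: S = e >]].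

Definition hered_linear_delaunay (R : realType) (d n : nat) (c : R)
  (B : 'I_n -> set 'rV[R]_d) : Prop :=
  forall S : {set 'I_n}, S != finset.set0 ->
    (#|delaunay_edges B S|%:R < c * #|S|%:R)%R.

Definition p2_property (R : realType) (d n : nat) (p : nat)
  (B : 'I_n -> set 'rV[R]_d) : Prop :=
  forall T : {set 'I_n}, #|T| = p ->
    exists i j, [/\ i \in T, j \in T, i != j & B i `&` B j !=set0].

From HB Require Import structures.
From mathcomp Require Import all_boot all_order all_algebra.
From mathcomp Require Import boolp classical_sets reals.
From mathcomp Require Import ring lra.
Set Implicit Arguments. Unset Strict Implicit. Unset Printing Implicit Defensive.
Import Order.TTheory GRing.Theory Num.Theory.
Local Open Scope ring_scope.
Local Notation inE := finset.inE.
Local Notation set0 := finset.set0.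
Local Notation subsetP := fintype.subsetP.
Local Notation setP := finset.setP.

(* Let G be the intersection graph of the family (two members are adjacent when
   they share a point) and let D be the maximal depth of a point.  The
   (p,2)-property says that G has no independent set of size p; keeping every
   vertex independently with probability 2(p-1)/n turns this into Turan's
   bound |E(G)| >= n^2 / (4(p-1)).  Conversely, fix a common point x_e for
   every edge e of G and keep every vertex with probability q = 1/(2D): the
   edge e survives as a Delaunay edge of the sample as soon as both its ends
   are kept and none of the at most D other members containing x_e is, which
   happens with probability at least q^2/2.  As the sample has at most c|S|
   Delaunay edges, |E(G)| <= 4cnD, hence D >= n / (16c(p-1)). *)

Lemma exists_subset_card (T : finType) (A : {set T}) k :
  (k <= #|A|)%N -> exists2 C : {set T}, C \subset A & #|C| = k.
Proof.
rewrite -bin_gt0 -cards_draws card_gt0 => /set0Pn[C].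
by rewrite inE => /andP[sCA /eqP cardC]; exists C.
Qed.

Section InducedEdges.
Variables (T : finType) (E : {set {set T}}).
Hypothesis card_edge : forall e, e \in E -> #|e| = 2.

Definition induced_edges (S : {set T}) := [set e in E | e \subset S].

Definition independent (A : {set T}) := forall e, e \in E -> ~~ (e \subset A).

Lemma independent0 : independent set0.
Proof.
move=> e /card_edge cardE; apply/negP; rewrite finset.subset0 => /eqP e0.
by rewrite e0 cards0 in cardE.
Qed.

Lemma induced_edgesS (S S' : {set T}) :
  S \subset S' -> induced_edges S \subset induced_edges S'.
Proof.
move=> sSS'; apply/subsetP => e; rewrite !inE => /andP[-> seS].
exact: fintype.subset_trans sSS'.
Qed.

Lemma card_induced_edges_setD1 (S : {set T}) u v : u \in S -> v \in S ->
  [set u; v] \in E -> (#|induced_edges (S :\ v)| < #|induced_edges S|)%N.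
Proof.
move=> uS vS uvE; apply: proper_card; apply/properP.
split; first by apply: induced_edgesS; apply: finset.subD1set.
exists [set u; v]; first by rewrite inE uvE finset.subUset !finset.sub1set uS vS.
rewrite inE negb_and orbC; apply/orP; left; apply/negP => /subsetP /(_ v).
by rewrite !inE eqxx orbT => /(_ isT).
Qed.

Lemma independent_setU1 (A : {set T}) v : independent A ->
  (forall u, u \in A -> [set u; v] \notin E) -> independent (v |: A).
Proof.
move=> indA noE e eE; apply/negP => sevA.
have [ve | nve] := boolP (v \in e); last first.
  apply: (negP (indA e eE)); apply/subsetP => x xe.
  by move: (subsetP sevA x xe); rewrite !inE => /predU1P[xv|//]; rewrite -xv xe in nve.
have /finset.cards1P[u eDv] : #|e :\ v| == 1%N.
  by have := card_edge eE; rewrite (cardsD1 v) ve add1n => -[->].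
have /setD1P[uv ue] : u \in e :\ v by rewrite eDv finset.set11.
have uA : u \in A by move: (subsetP sevA u ue); rewrite !inE (negbTE uv).
have uve : [set u; v] = e by rewrite -(finset.setD1K ve) eDv finset.setUC.
by have := noE u uA; rewrite uve eE.
Qed.

Lemma exists_independent_card_le (S : {set T}) : exists2 A : {set T},
  A \subset S & independent A /\ (#|S| <= #|induced_edges S| + #|A|)%N.
Proof.
have [m] := ubnP #|S|; elim: m S => // m IH S; rewrite ltnS => leSm.
have [-> | [v vS]] := set_0Vmem S.
  by exists set0; rewrite ?finset.sub0set ?cards0; split; first exact: independent0.
have cardS : #|S| = #|S :\ v|.+1 by rewrite (cardsD1 v) vS.
have [|A sASv [indA leSvA]] := IH (S :\ v); first by rewrite -ltnS -cardS.
have sAS : A \subset S := fintype.subset_trans sASv (finset.subD1set S v).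
have [[u uSv uvE] | noE] := pselect (exists2 u, u \in S :\ v & [set u; v] \in E).
  have /setD1P[_ uS] := uSv.
  have := card_induced_edges_setD1 uS vS uvE.
  by exists A => //; split=> //; rewrite cardS; apply: leq_ltn_trans leSvA _; rewrite ltn_add2r.
have vA : v \notin A by apply: contraL vS => /(subsetP sASv); rewrite !inE eqxx.
exists (v |: A); first by rewrite finset.subUset finset.sub1set vS.
split; last by rewrite cardsU1 vA cardS addnS ltnS (leq_trans leSvA) // leq_add2r
  subset_leq_card // induced_edgesS // finset.subD1set.
apply: independent_setU1 => // u uA; apply/negP => uvE.
by apply: noE; exists u => //; apply: subsetP sASv u uA.
Qed.

Lemma card_le_induced_edges p : (forall A : {set T}, independent A -> (#|A| < p)%N) ->
  forall S : {set T}, (#|S| <= #|induced_edges S| + p.-1)%N.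
Proof.
move=> indp S; have [A _ [/indp ltAp leSA]] := exists_independent_card_le S.
by rewrite (leq_trans leSA) // leq_add2l -ltnS (leq_trans ltAp) // leqSpred.
Qed.

End InducedEdges.

Lemma disjoints0 (T : finType) (A : {set T}) : [disjoint A & set0].
Proof. by rewrite finset.disjoints_subset finset.setC0 finset.subsetT. Qed.

Lemma sumr_bool_card (R : pzSemiRingType) (I : finType) (P : pred I) (b : pred I) :
  \sum_(i | P i) (b i)%:R = #|[pred i | P i && b i]|%:R :> R.
Proof.
rewrite (eq_bigr (fun i => if b i then 1 else 0)); last by move=> i _; case: (b i).
by rewrite -big_mkcondr sumr_const.
Qed.

Lemma natr_forall (R : comPzSemiRingType) (I : finType) (P : pred I) :
  ([forall i, P i])%:R = \prod_i (P i)%:R :> R.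
Proof.
have [/forallP allP | /forallPn[i nPi]] := boolP [forall i, P i].
  by rewrite big1 // => i _; rewrite allP.
by rewrite (bigD1 i) //= (negbTE nPi) mul0r.
Qed.

Section BernoulliSampling.
Variables (R : realDomainType) (I : finType) (q : R).

(* [bernoulli_weight f] is the probability that the random subset of [I]
   containing each element independently with probability [q] is [sampled f];
   sums weighted by it are expectations. *)
Definition bernoulli_weight (f : {ffun I -> bool}) : R :=
  \prod_i (if f i then q else 1 - q).

Definition sampled (f : {ffun I -> bool}) : {set I} := [set i | f i].

Lemma sampled_eventE f (A C : {set I}) :
  (A \subset sampled f) && [disjoint sampled f & C]
  = [forall i, ((i \in A) ==> f i) && ((i \in C) ==> ~~ f i)].
Proof.
apply/andP/forallP => [[/subsetP sA dC] i|fAC].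
  apply/andP; split; apply/implyP; first by move/sA; rewrite inE.
  by move=> iC; have := disjointFl dC iC; rewrite inE => ->.
split; first by apply/subsetP => i /[!inE] iA; have /andP[/implyP->] := fAC i.
apply/pred0P => i /=; rewrite inE; have /andP[_ /implyP] := fAC i.
by case: (f i); case: (i \in C) => // /(_ isT).
Qed.

Lemma sum_bernoulli_weight_event (A C : {set I}) : [disjoint A & C] ->
  \sum_f bernoulli_weight f * ((A \subset sampled f) && [disjoint sampled f & C])%:R
  = q ^+ #|A| * (1 - q) ^+ #|C|.
Proof.
move=> dAC.
pose g i (b : bool) : R := if b then (i \notin C)%:R * q else (i \notin A)%:R * (1 - q).
have weight_event f : bernoulli_weight f * ((A \subset sampled f) && [disjoint sampled f & C])%:R
    = \prod_i g i (f i).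
  rewrite sampled_eventE natr_forall -big_split /=; apply: eq_bigr => i _.
  rewrite /g; case: (f i); case: (i \in A); case: (i \in C);
    by rewrite /= ?mul1r ?mul0r ?mulr1 ?mulr0.
under eq_bigr do rewrite weight_event.
rewrite -(bigA_distr_bigA g) /=; under eq_bigr do rewrite big_bool.
rewrite (eq_bigr (fun i => (if i \in A then q else 1) * (if i \in C then 1 - q else 1))).
  by rewrite big_split /= -!big_mkcond !prodr_const.
move=> i _; rewrite /g; case iA: (i \in A); case iC: (i \in C) => /=.
- by have := disjointFr dAC iA; rewrite iC.
all: by rewrite !(mul0r, mul1r, mulr1, addr0, add0r) ?subrKC.
Qed.

Lemma sum_bernoulli_weight_count (J : finType) (P : pred J) (A C : J -> {set I}) :
  (forall j, P j -> [disjoint A j & C j]) ->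
  \sum_f bernoulli_weight f *
      \sum_(j | P j) ((A j \subset sampled f) && [disjoint sampled f & C j])%:R
  = \sum_(j | P j) q ^+ #|A j| * (1 - q) ^+ #|C j|.
Proof.
move=> dAC; under eq_bigr do rewrite mulr_sumr.
by rewrite exchange_big; apply: eq_bigr => j Pj; apply: sum_bernoulli_weight_event; apply: dAC.
Qed.

Lemma sum_bernoulli_weight : \sum_f bernoulli_weight f = 1.
Proof.
have := sum_bernoulli_weight_event (disjoints0 set0); rewrite cards0 !expr0 mulr1 => <-.
by apply: eq_bigr => f _; rewrite finset.sub0set disjoints0 mulr1.
Qed.

Lemma sum_bernoulli_weight_card : \sum_f bernoulli_weight f * #|sampled f|%:R = q * #|I|%:R.
Proof.
have := @sum_bernoulli_weight_count I predT (fun i => [set i]) (fun _ => set0)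
  (fun j _ => disjoints0 _).
under [in RHS]eq_bigr do rewrite cards1 cards0 expr1 expr0 mulr1.
rewrite sumr_const mulr_natr => <-; apply: eq_bigr => f _; congr (_ * _).
rewrite sumr_bool_card; congr (_%:R); apply: eq_card => i.
by rewrite !inE finset.sub1set disjoints0 andbT inE.
Qed.

Hypothesis q01 : 0 <= q <= 1.

Lemma bernoulli_weight_ge0 f : 0 <= bernoulli_weight f.
Proof.
have /andP[q0 q1] := q01.
by apply: prodr_ge0 => i _; case: (f i); rewrite ?subr_ge0.
Qed.

Lemma ler_sum_bernoulli_weight (F G : {ffun I -> bool} -> R) : (forall f, F f <= G f) ->
  \sum_f bernoulli_weight f * F f <= \sum_f bernoulli_weight f * G f.
Proof. by move=> leFG; apply: ler_sum => f _; rewrite ler_wpM2l ?bernoulli_weight_ge0. Qed.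

End BernoulliSampling.

Lemma bernoulli_ineq (R : realDomainType) (q : R) m : 0 <= q <= 1 ->
  1 - m%:R * q <= (1 - q) ^+ m.
Proof.
move=> /andP[q0 q1]; elim: m => [|m IH]; first by rewrite mul0r subr0 expr0.
rewrite exprS -natr1; apply: le_trans (ler_wpM2l _ IH); last by rewrite subr_ge0.
have m0 : 0 <= m%:R :> R by [].
nra.
Qed.

Section Turan.
Variables (R : realFieldType) (T : finType) (E : {set {set T}}) (p : nat).
Hypothesis card_edge : forall e, e \in E -> #|e| = 2.
Hypothesis independent_lt : forall A : {set T}, independent E A -> (#|A| < p)%N.

Lemma card_induced_edges_sum (S : {set T}) :
  #|induced_edges E S|%:R = \sum_(e in E) ((e \subset S) && [disjoint S & set0])%:R :> R.
Proof.
by rewrite sumr_bool_card; congr (_%:R); apply: eq_card => e; rewrite !inE disjoints0 andbT.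
Qed.

Lemma sampled_card_le (r : R) : 0 <= r <= 1 ->
  r * #|T|%:R <= r ^+ 2 * #|E|%:R + (p.-1)%:R.
Proof.
move=> r01; rewrite -sum_bernoulli_weight_card.
apply: le_trans (ler_sum_bernoulli_weight r01 (G := fun f =>
  #|induced_edges E (sampled f)|%:R + (p.-1)%:R) _) _.
  by move=> f; rewrite -natrD ler_nat card_le_induced_edges.
under eq_bigr do rewrite mulrDr card_induced_edges_sum.
rewrite big_split /= -mulr_suml sum_bernoulli_weight mul1r lerD2r.
rewrite sum_bernoulli_weight_count; last by move=> e _; apply: disjoints0.
rewrite (eq_bigr (fun _ => r ^+ 2)) ?sumr_const ?mulr_natr //.
by move=> e /card_edge ->; rewrite cards0 expr0 mulr1.
Qed.

Lemma turan_card_edges : (2 <= p)%N -> (2 * p <= #|T|)%N ->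
  #|T|%:R ^+ 2 <= 4 * (p.-1)%:R * #|E|%:R :> R.
Proof.
move=> p2 le2pT; set N : R := #|T|%:R; set P1 : R := (p.-1)%:R; set G : R := #|E|%:R.
have P1_ge1 : 1 <= P1 by rewrite (ler_nat R 1) -ltnS prednK // ltnW.
have P1N : 2 * P1 <= N.
  have : (2 * p.-1 <= #|T|)%N by rewrite (leq_trans _ le2pT) // leq_mul2l leq_pred orbT.
  by rewrite -(ler_nat R) natrM.
have N0 : 0 < N by lra.
set r := 2 * P1 / N.
have rN : r * N = 2 * P1 by rewrite mulfVK ?gt_eqF.
have r01 : 0 <= r <= 1.
  by rewrite divr_ge0 ?ler_pdivrMr ?mul1r //=; lra.
have := sampled_card_le r01; rewrite -/N -/G -/P1 rN => le_P1.
have : P1 * N ^+ 2 <= P1 * (4 * P1 * G).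
  have -> : P1 * (4 * P1 * G) = (r * N) ^+ 2 * G by rewrite rN; ring.
  by rewrite exprMn mulrAC ler_wpM2r ?sqr_ge0 //; lra.
by rewrite ler_pM2l //; lra.
Qed.

End Turan.

Section IntersectionGraph.
Variables (R : realType) (d n : nat) (B : 'I_n -> set 'rV[R]_d).

Definition intersection_edges : {set {set 'I_n}} :=
  [set e : {set 'I_n} | (#|e| == 2) && `[< exists x, e \subset dual_edge B x >]].

Lemma card_intersection_edge e : e \in intersection_edges -> #|e| = 2.
Proof. by rewrite inE => /andP[/eqP]. Qed.

Lemma independent_intersection_lt p (A : {set 'I_n}) : p2_property p B ->
  independent intersection_edges A -> (#|A| < p)%N.
Proof.
move=> p2B indA; rewrite ltnNge; apply/negP => /exists_subset_card[C sCA cardC].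
have [i [j [iC jC ij [x [Bix Bjx]]]]] := p2B C cardC.
apply: (negP (indA [set i; j] _)).
  rewrite inE finset.cards2 ij; apply/asboolP; exists x.
  by rewrite finset.subUset !finset.sub1set !inE; apply/andP; split; apply: mem_set.
by rewrite finset.subUset !finset.sub1set !(subsetP sCA).
Qed.

Lemma card_delaunay_edges_le (c : R) (S : {set 'I_n}) : 0 <= c ->
  hered_linear_delaunay c B -> #|delaunay_edges B S|%:R <= c * #|S|%:R.
Proof.
move=> c0 cB; have [-> | /cB /ltW //] := eqVneq S set0.
rewrite cards0 mulr0 (_ : delaunay_edges B set0 = set0) ?cards0 //.
apply/setP => e; rewrite finset.in_set0 inE; apply/negP => /andP[/eqP cardE /asboolP [x ex]].
by rewrite -ex finset.setI0 cards0 in cardE.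
Qed.

Lemma intersection_edges_witness : exists X : {set 'I_n} -> 'rV[R]_d,
  forall e, e \in intersection_edges -> e \subset dual_edge B (X e).
Proof.
suff /boolp.choice[X witX] : forall e, exists x : 'rV[R]_d,
  e \in intersection_edges -> e \subset dual_edge B x by exists X.
move=> e; have [eE | _] := boolP (e \in intersection_edges); last by exists 0.
by move: (eE); rewrite inE => /andP[_ /asboolP[x ex]]; exists x.
Qed.

Lemma witnessed_le_card_delaunay_edges (X : {set 'I_n} -> 'rV[R]_d) (S : {set 'I_n}) :
  (forall e, e \in intersection_edges -> e \subset dual_edge B (X e)) ->
  \sum_(e in intersection_edges)
      ((e \subset S) && [disjoint S & dual_edge B (X e) :\: e])%:R
  <= #|delaunay_edges B S|%:R :> R.
Proof.
move=> witX; rewrite sumr_bool_card ler_nat; apply: subset_leq_card.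
apply/subsetP => e; rewrite unfold_in => /andP[eE /andP[eS dS]].
rewrite inE card_intersection_edge // eqxx; apply/asboolP; exists (X e).
apply/setP => i; rewrite finset.in_setI; apply/andP/idP => [[iX iS] | ie].
  by apply: contraFT (disjointFr dS iS) => nie; rewrite inE nie.
by rewrite (subsetP (witX e eE)) // (subsetP eS).
Qed.

Lemma sampled_intersection_edges_le (c q t : R) : 0 <= c -> hered_linear_delaunay c B ->
  0 <= q <= 1 -> (forall x, #|dual_edge B x|%:R <= t) ->
  #|intersection_edges|%:R * (q ^+ 2 * (1 - t * q)) <= c * (q * n%:R).
Proof.
move=> c0 cB q01 depth_le; have [X witX] := intersection_edges_witness.
have -> : c * (q * n%:R)
    = \sum_(f : {ffun 'I_n -> bool}) bernoulli_weight q f * (c * #|sampled f|%:R).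
  by rewrite -[n in q * n%:R]card_ord -sum_bernoulli_weight_card mulr_sumr;
    apply: eq_bigr => f _; rewrite mulrCA.
apply: le_trans (ler_sum_bernoulli_weight q01 (fun f => card_delaunay_edges_le (sampled f) c0 cB)).
apply: le_trans _ (ler_sum_bernoulli_weight q01
  (fun f => witnessed_le_card_delaunay_edges (sampled f) witX)).
rewrite sum_bernoulli_weight_count; last first.
  by move=> e _; rewrite finset.disjoints_subset finset.setCD finset.subsetUr.
rewrite mulr_natl -sumr_const; apply: ler_sum => e eE; rewrite card_intersection_edge //.
rewrite ler_wpM2l ?sqr_ge0 //; apply: le_trans (bernoulli_ineq _ q01).
rewrite lerD2l lerN2 ler_wpM2r //; first by case/andP: q01.
apply: le_trans (depth_le (X e)); rewrite ler_nat subset_leq_card //.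
exact: finset.subsetDl.
Qed.

Lemma card_intersection_edges_le (c t : R) : 0 <= c -> hered_linear_delaunay c B ->
  1 <= t -> (forall x, #|dual_edge B x|%:R <= t) ->
  #|intersection_edges|%:R <= 4 * c * n%:R * t.
Proof.
move=> c0 cB t1 depth_le; set q := (2 * t)^-1.
have q0 : 0 < q by rewrite invr_gt0; lra.
have tq : t * q = 2^-1 by rewrite /q invfM mulrCA divff ?mulr1 //; lra.
have q01 : 0 <= q <= 1 by rewrite ltW // invf_le1; lra.
have := sampled_intersection_edges_le c0 cB q01 depth_le; rewrite tq.
have -> : 4 * c * n%:R * t = c * (q * n%:R) / (q ^+ 2 * (1 - 2^-1)).
  by rewrite /q; field; lra.
by rewrite ler_pdivlMr // mulr_gt0 ?exprn_gt0 //; lra.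
Qed.

Lemma exists_deepest_point :
  exists x, forall y, (#|dual_edge B y| <= #|dual_edge B x|)%N.
Proof.
pose depth_of k := `[< exists x, #|dual_edge B x| = k >].
have depth0 : exists k, depth_of k by exists #|dual_edge B 0|; apply/asboolP; exists 0.
have depth_le_n k : depth_of k -> (k <= n)%N.
  by move=> /asboolP[x <-]; rewrite -[n in (_ <= n)%N]card_ord max_card.
case: (ex_maxnP depth0 depth_le_n) => _ /asboolP[x <-] maxx; exists x => y.
by apply: maxx; apply/asboolP; exists y.
Qed.

Lemma card_le_max_depth (c t : R) p : 0 <= c -> hered_linear_delaunay c B ->
  p2_property p B -> (2 <= p)%N -> (2 * p <= n)%N ->
  1 <= t -> (forall x, #|dual_edge B x|%:R <= t) ->
  n%:R <= 16 * c * (p.-1)%:R * t.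
Proof.
move=> c0 cB p2B p2 le2pn t1 depth_le.
have := turan_card_edges R card_intersection_edge (fun A => @independent_intersection_lt p A p2B) p2.
rewrite card_ord => /(_ le2pn) le_turan.
have n0 : 0 < n%:R :> R by rewrite ltr0n (leq_trans _ le2pn) // muln_gt0 (ltnW p2).
suff : n%:R ^+ 2 <= n%:R * (16 * c * (p.-1)%:R * t) by rewrite expr2 ler_pM2l.
have -> : n%:R * (16 * c * (p.-1)%:R * t) = 4 * (p.-1)%:R * (4 * c * n%:R * t) by ring.
by rewrite (le_trans le_turan) // ler_wpM2l ?mulr_ge0 // card_intersection_edges_le.
Qed.

End IntersectionGraph.

Local Open Scope classical_set_scope.

Theorem mainTheorem5 (R : realType) (c : R) : 0 < c ->
  exists delta : R, 0 < delta /\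
  forall (d p n : nat) (B : 'I_n -> set 'rV[R]_d),
    (2 <= p)%N -> (1 <= n)%N ->
    (forall i, B i !=set0) ->
    hered_linear_delaunay c B ->
    p2_property p B ->
    exists x : 'rV[R]_d, delta * n%:R / p%:R <= (#|dual_edge B x|%:R : R).
Proof.
move=> c0; set delta := (2 + 16 * c)^-1.
have delta0 : 0 < delta by rewrite invr_gt0; lra.
have c_delta0 : 0 <= 16 * c * delta by rewrite !mulr_ge0 ?ltW.
have delta_sum : 2 * delta + 16 * c * delta = 1 by rewrite -mulrDl mulfV //; lra.
exists delta; split => // d p n B p2 n1 Bne cB p2B.
have [x deepest] := exists_deepest_point B; exists x; set D : R := #|dual_edge B x|%:R.
have D1 : 1 <= D.
  have [y Biy] := Bne (Ordinal n1); rewrite (ler_nat R 1) (leq_trans _ (deepest y)) //.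
  by rewrite card_gt0; apply/finset.set0Pn; exists (Ordinal n1); rewrite finset.inE; apply: mem_set.
have P0 : 0 < p%:R :> R by rewrite ltr0n ltnW.
rewrite ler_pdivrMr //; have [ltn2p | le2pn] := ltnP n (2 * p).
  have le_n2p : n%:R <= 2 * p%:R :> R by have := ltnW ltn2p; rewrite -(ler_nat R) natrM.
  apply: le_trans (ler_wpM2l (ltW delta0) le_n2p) _.
  by rewrite mulrA ler_wpM2r //; lra.
have depth_le y : #|dual_edge B y|%:R <= D by rewrite ler_nat.
have := card_le_max_depth (ltW c0) cB p2B p2 le2pn D1 depth_le.
move=> /(ler_wpM2l (ltW delta0)) /le_trans; apply.
have P1P : (p.-1)%:R <= p%:R :> R by rewrite ler_nat leq_pred.
have -> : delta * (16 * c * (p.-1)%:R * D) = 16 * c * delta * ((p.-1)%:R * D) by ring.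
apply: le_trans (ler_wpM2r _ (_ : 16 * c * delta <= 1)) _; rewrite ?mulr_ge0 //; first lra.
by rewrite mul1r mulrC ler_wpM2l // ltW.
Qed.
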